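(* Let $(F_n)_{n\ge 0}$ be the Fibonacci numbers, $F_0=0$, $F_1=F_2=1$, $F_{n+2}=F_{n+1}+F_n$. Let $\mathbf{P}$ be the Fibonacci cobweb poset on the set of positive integers, defined as follows: for $k\ge 1$ the $k$-th level is the set $\Phi_k=\{x\in\mathbb{N}: F_{k+1}\le x\le F_{k+2}-1\}$ (so $|\Phi_k|=F_k$, and the levels partition $\{1,2,3,\dots\}$), and for $x\in\Phi_k$, $y\in\Phi_n$ we have $x\le y$ in $\mathbf{P}$ if and only if $x=y$ or $k<n$. Let $\mu$ be the M\''obius function of $\mathbf{P}$, i.e. the function on pairs of elements of $\mathbf{P}$ determined by $\mu(x,x)=1$ for all $x$, $\mu(x,y)=-\sum_{z:\,x\le z<y}\mu(x,z)$ for $x<y$, and $\mu(x,y)=0$ when $x\not\le y$. Then for $x\in\Phi_k$ and $y\in\Phi_n$: $$\mu(x,y)=\begin{cases} 0 & \text{if } x>y \text{ (as integers)},\\ 1 & \text{if } x=y,\\ 0 & \text{if } n=k \text{ and } x\neq y,\\ -1 & \text{if } n=k+1,\\ -\prod_{l=k+1}^{n-1}(1-F_l) & \text{if } n>k+1.\end{cases}$$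
   Context: The M\''obius function $\mu$ of a locally finite poset is the inverse of its zeta function $\zeta$ ($\zeta(x,y)=1$ if $x\le y$, $0$ otherwise) in the incidence algebra, where the product is $(f*g)(x,y)=\sum_{x\le z\le y}f(x,z)g(z,y)$; equivalently it is given by the recursion stated in the claim. In the cobweb poset, every element of level $k$ is below every element of every higher level, and distinct elements of the same level are incomparable. *)

From mathcomp Require Import all_boot all_order all_algebra.
Set Implicit Arguments. Unset Strict Implicit. Unset Printing Implicit Defensive.
Import GRing.Theory Num.Theory.

Fixpoint fib (n : nat) : nat :=
  match n with
  | 0 => 0
  | 1 => 1
  | (m.+1 as p).+1 => fib p + fib m
  end.

Definition in_level (k x : nat) : bool :=
  (1 <= k) && (fib k.+1 <= x) && (x < fib k.+2).

(* strict order of the cobweb poset on positive integers: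
   x < y iff x in Phi_k, y in Phi_n with k < n.
   (The level of any x is at most x, so the bounded quantifiers lose nothing.) *)
Definition cobweb_lt (x y : nat) : bool :=
  [exists k : 'I_x.+1, exists n : 'I_y.+1,
     [&& in_level k x, in_level n y & (k < n)%N]].

Definition cobweb_le (x y : nat) : bool := (x == y) || cobweb_lt x y.

(* mu is the Moebius function of the cobweb poset (on elements 1,2,3,...).
   Any z with z < y in P satisfies z < y as integers, so the sum over
   {z : x <= z < y} is taken over z in [1, y). *)
Definition is_cobweb_mobius (mu : nat -> nat -> int) : Prop :=
  (forall x, (0 < x)%N -> mu x x = 1%R) /\
  (forall x y, (0 < x)%N -> (0 < y)%N -> cobweb_lt x y ->
     mu x y = (- \sum_(1 <= z < y | cobweb_le x z && cobweb_lt z y) mu x z)%R) /\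
  (forall x y, (0 < x)%N -> (0 < y)%N -> ~~ cobweb_le x y -> mu x y = 0%R).

From mathcomp Require Import all_boot all_order all_algebra.
Import GRing.Theory Num.Theory.

Set Implicit Arguments.
Unset Strict Implicit.

(* For x in level k and y in level n > k, the interval [x, y) of the cobweb
   poset is {x} together with the whole levels k+1, ..., n-1.  Hence mu(x, y)
   only depends on k and n, and the defining recursion becomes
   m_n = -(1 + sum_(k < j < n) F_j m_j).  Its solution is m_n = -P_n with
   P_n = prod_(k < l < n) (1 - F_l), because P_(j+1) - P_j = -P_j F_j makes
   the sum telescope. *)

Lemma fibSS n : fib n.+2 = fib n.+1 + fib n.
Proof. by []. Qed.

Lemma fib_monotone m n : (m <= n)%N -> (fib m <= fib n)%N.
Proof.
apply: (homo_leq (r := leq)) => [//|a b c|[|i] //]; first exact: leq_trans.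
by rewrite fibSS leq_addr.
Qed.

Lemma fib_gt0 n : (0 < n)%N -> (0 < fib n)%N.
Proof. by case: n => // n _; exact: (fib_monotone (ltn0Sn n)). Qed.

Lemma leq_fibS n : (n <= fib n.+1)%N.
Proof.
elim: n => [|[|n] IH] //.
by rewrite fibSS -[X in (X <= _)%N]addn1 leq_add // fib_gt0.
Qed.

Lemma in_level_fib_leq m j z : in_level j z -> (fib m.+1 <= z)%N = (m <= j)%N.
Proof.
case/andP=> /andP[_ lo] hi; apply/idP/idP => [|le_mj].
- apply: contraTT; rewrite -!ltnNge => lt_jm.
  by apply: leq_trans hi _; apply: fib_monotone.
- by apply: leq_trans lo; apply: fib_monotone.
Qed.

Lemma in_level_gt0 k x : in_level k x -> (0 < x)%N.
Proof. by case/andP=> /andP[k_gt0 lo] _; apply: leq_trans lo; apply: fib_gt0. Qed.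

Lemma in_level_leq k x : in_level k x -> (k <= x)%N.
Proof. by case/andP=> /andP[_ lo] _; apply: leq_trans (leq_fibS k) lo. Qed.

Lemma in_level_ltn k n x y : in_level k x -> in_level n y -> (k < n)%N -> (x < y)%N.
Proof.
move=> /andP[_ hi] hy lt_kn; apply: leq_trans hi _.
by rewrite (in_level_fib_leq _ hy).
Qed.

Lemma in_level_inj k n x : in_level k x -> in_level n x -> k = n.
Proof.
move=> hk hn; apply/eqP; rewrite eqn_leq -(in_level_fib_leq _ hn) -(in_level_fib_leq _ hk).
by case/andP: hk => /andP[_ ->] _; case/andP: hn => /andP[_ ->] _.
Qed.

Lemma exists_level z : (0 < z)%N -> exists j, in_level j z.
Proof.
move=> z_gt0; have ex_j : exists j, (z < fib j.+2)%N by exists z; apply: leq_fibS.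
case: (ex_minnP ex_j) => [[|j] hi min_j]; first by move: hi; rewrite ltnNge z_gt0.
exists j.+1; rewrite /in_level hi andbT /= leqNgt.
by apply/negP => /min_j; rewrite ltnn.
Qed.

Lemma cobweb_ltE k n x y : in_level k x -> in_level n y -> cobweb_lt x y = (k < n)%N.
Proof.
move=> hx hy; apply/existsP/idP => [[k' /existsP[n' /and3P[hk' hn' lt_kn]]]|lt_kn].
  by rewrite -(in_level_inj hk' hx) -(in_level_inj hn' hy).
exists (Ordinal (in_level_leq hx : k < x.+1)).
apply/existsP; exists (Ordinal (in_level_leq hy : n < y.+1)).
by rewrite /= hx hy lt_kn.
Qed.

Lemma cobweb_intervalE k n x y z :
    in_level k x -> in_level n y -> (k < n)%N -> (0 < z)%N ->
  cobweb_le x z && cobweb_lt z y = (z == x) || (fib k.+2 <= z < fib n.+1)%N.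
Proof.
move=> hx hy lt_kn /exists_level[j hz].
rewrite /cobweb_le (cobweb_ltE hx hz) (cobweb_ltE hz hy) eq_sym.
rewrite (in_level_fib_leq _ hz) [(z < _)%N]ltnNge (in_level_fib_leq _ hz) -ltnNge.
by case: eqP => [exz|//]; subst z; rewrite (in_level_inj hz hx) lt_kn.
Qed.

Local Open Scope ring_scope.

Lemma sum_cobweb_interval (V : nmodType) (f : nat -> V) k n x y :
    in_level k x -> in_level n y -> (k < n)%N ->
  \sum_(1 <= z < y | cobweb_le x z && cobweb_lt z y) f z
    = f x + \sum_(fib k.+2 <= z < fib n.+1) f z.
Proof.
move=> hx hy lt_kn.
rewrite big_nat_cond (eq_bigl (fun z =>
    (1 <= z < y)%N && ((z == x) || (fib k.+2 <= z < fib n.+1)%N))); last first.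
  by move=> z; apply: andb_id2l => /andP[z_gt0 _]; apply: cobweb_intervalE.
rewrite -big_nat_cond (bigID (fun z => z == x)) big_nat1_cond_eq eqxx (in_level_gt0 hx).
rewrite (in_level_ltn hx hy lt_kn); congr (_ + _).
have x_lt : (x < fib k.+2)%N by case/andP: hx.
have ge1 : (1 <= fib k.+2)%N by apply: fib_gt0.
have le_y : (fib n.+1 <= y)%N by case/andP: hy => /andP[].
rewrite (big_nat_widen _ _ _ _ _ le_y) (big_nat_widenl _ _ _ _ _ ge1).
apply: eq_bigl => z; rewrite andTb [RHS]andbC.
have [->|_] := eqVneq z x; last by rewrite andbT.
by rewrite leqNgt x_lt andbF.
Qed.

Lemma big_nat_blocks (R : Type) (idx : R) (op : Monoid.law idx)
    (g : nat -> nat) (F : nat -> R) a b :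
    {homo g : m n / (m <= n)%N} -> (a <= b)%N ->
  \big[op/idx]_(g a <= i < g b) F i
    = \big[op/idx]_(a <= j < b) \big[op/idx]_(g j <= i < g j.+1) F i.
Proof.
move=> g_mono; elim: b => [|b IH]; first by rewrite leqn0 => /eqP->; rewrite !big_geq.
rewrite leq_eqVlt => /predU1P[->|lt_ab]; first by rewrite !big_geq.
by rewrite big_nat_recr // -IH // (big_cat_nat (g_mono a b lt_ab) (g_mono _ _ (leqnSn b))).
Qed.

Lemma prod_1subr_nat (R : pzRingType) (a : nat -> R) m n : (m <= n)%N ->
  \prod_(m <= l < n) (1 - a l)
    = 1 - \sum_(m <= j < n) (\prod_(m <= l < j) (1 - a l)) * a j.
Proof.
move=> le_mn; set P := fun j => \prod_(m <= l < j) (1 - a l).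
have -> : \sum_(m <= j < n) P j * a j = - P n - - P m.
  apply: (telescope_sumr_eq (fun j => - P j)) le_mn _ => j /andP[le_mj _].
  by rewrite /P big_nat_recr //= mulrBr mulr1 opprB opprK subrK.
by rewrite /P [\prod_(m <= l < m) _]big_geq // opprB opprK addNKr.
Qed.

Lemma cobweb_mobius_lt mu k n x y : is_cobweb_mobius mu ->
    in_level k x -> in_level n y -> (k < n)%N ->
  mu x y = - \prod_(k.+1 <= l < n) (1 - (fib l)%:Z).
Proof.
case=> mu_diag [mu_lt _] hx; elim/ltn_ind: n y => n IH y hy lt_kn.
have k_gt0 : (0 < k)%N by case/andP: hx => /andP[].
rewrite mu_lt ?(in_level_gt0 hx) ?(in_level_gt0 hy) ?(cobweb_ltE hx hy) //.
rewrite (sum_cobweb_interval _ hx hy lt_kn) mu_diag ?(in_level_gt0 hx) //.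
rewrite (big_nat_blocks _ (g := fun j => fib j.+1)) //; last first.
  by move=> i j le_ij; apply: fib_monotone.
rewrite prod_1subr_nat //; congr (- (1 + _)); rewrite -sumrN.
apply: eq_big_nat => j /andP[lt_kj lt_jn].
have mu_level z : (fib j.+1 <= z < fib j.+2)%N ->
    mu x z = - \prod_(k.+1 <= l < j) (1 - (fib l)%:Z).
  case/andP=> lo hi; apply: IH => //.
  by rewrite /in_level lo hi (leq_trans k_gt0 (ltnW lt_kj)).
by rewrite (eq_big_nat _ _ mu_level) sumr_const_nat fibSS addKn -mulr_natr natz mulNr.
Qed.

Theorem mainTheorem1 (mu : nat -> nat -> int) (hmu : is_cobweb_mobius mu)
  (k n x y : nat) (hx : in_level k x) (hy : in_level n y) :
  mu x y =
    (if (y < x)%N then 0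
     else if x == y then 1
     else if n == k then 0
     else if n == k.+1 then -1
     else - \prod_(k.+1 <= l < n) (1 - (fib l)%:Z))%R.
Proof.
have [mu_diag [_ mu_nle]] := hmu.
have [x_gt0 y_gt0] := (in_level_gt0 hx, in_level_gt0 hy).
have [lt_yx|le_xy] := ltnP y x.
  apply: mu_nle; rewrite // /cobweb_le gtn_eqF // (cobweb_ltE hx hy) /=.
  by apply/negP => /(in_level_ltn hx hy)/(ltn_trans lt_yx); rewrite ltnn.
case: eqP => [<-|neq_xy]; first exact: mu_diag.
have [lt_nk|lt_kn|eq_nk] := ltngtP n k.
- by have := in_level_ltn hy hx lt_nk; rewrite ltnNge le_xy.
- rewrite (cobweb_mobius_lt hmu hx hy lt_kn).
  by case: eqP => [->|//]; rewrite big_geq.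
- apply: mu_nle => //.
  by rewrite /cobweb_le (cobweb_ltE hx hy) eq_nk ltnn orbF; exact/eqP.
Qed.
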